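(* Let $\alpha=(\alpha_1,\dots,\alpha_s)\in\mathbb{K}_s$ and let $1\le i<j\le s$. Then $\alpha^i=-\overline{\alpha^j}$ (as tuples) if and only if $\alpha$ is symmetric and $i+j=s+1$.
   Context: $\mathbb{K}_s=\{(\alpha_1,\dots,\alpha_s)\in\mathbb{Z}^s:\ \alpha_k\alpha_{k+1}<0 \text{ for all } 1\le k\le s-1\}$, with all entries nonzero. For $\beta=(\beta_1,\dots,\beta_s)\in\mathbb{Z}^s$, $-\beta=(-\beta_1,\dots,-\beta_s)$ and $\overline{\beta}=(\beta_s,\dots,\beta_1)$; $\beta$ is symmetric if $\beta=-\overline{\beta}$. For $1\le i\le s$, $\alpha^i=(\alpha_1,\dots,\alpha_{i-1},\alpha_i*1,\alpha_{i+1},\dots,\alpha_s)$, where $\alpha_i*1=\alpha_i-1$ if $\alpha_i>0$ and $\alpha_i*1=\alpha_i+1$ otherwise. *)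

(* tuples are sequences of integers (seq int), indices 1-based
   in the paper, 0-based in seq (nth). *)
From mathcomp Require Import all_boot all_order all_algebra.
Set Implicit Arguments. Unset Strict Implicit. Unset Printing Implicit Defensive.
Import Order.TTheory GRing.Theory Num.Theory.
Local Open Scope ring_scope.

Definition inK (s : nat) (alpha : seq int) : Prop :=
  size alpha = s /\
  (forall k : nat, (k < s)%N -> nth 0 alpha k != 0) /\
  (forall k : nat, (k.+1 < s)%N -> nth 0 alpha k * nth 0 alpha k.+1 < 0).

Definition star1 (a : int) : int := if 0 < a then a - 1 else a + 1.

Definition sup (alpha : seq int) (i : nat) : seq int :=
  set_nth 0 alpha i.-1 (star1 (nth 0 alpha i.-1)).

Definition negs (beta : seq int) : seq int := map (fun x => - x) beta.

Definition bar (beta : seq int) : seq int := rev beta.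

Definition symmetricK (beta : seq int) : Prop := beta = negs (bar beta).

(* Write I < J for the 0-based positions of i and j. Comparing alpha^i with
   -overline(alpha^j) entrywise, the changed entry at I faces position s-1-I;
   if that is not J, the entries at I and s-1-I force star1 x = x or
   star1 x = -x, which is impossible. So I + J = s - 1, and away from I and J
   the equation says alpha = -overline alpha. At I it says
   star1 alpha_I = - star1 alpha_J. The entries alternate in sign, so if I and
   J had the same parity the middle entry would equal its own negative;
   hence alpha_I and alpha_J have opposite signs, where star1 is injective up
   to sign, giving alpha_I = - alpha_J. *)

From mathcomp Require Import all_boot all_order all_algebra.
From mathcomp Require Import zify.
Import Order.TTheory GRing.Theory Num.Theory.

Local Open Scope ring_scope.

Lemma star1_neq (x : int) : star1 x != x.
Proof. by rewrite /star1; case: ifP => _; lia. Qed.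

Lemma star1_neqN (x : int) : star1 x != - x.
Proof. by rewrite /star1; case: ifP => _; lia. Qed.

Lemma star1N (x : int) : x != 0 -> star1 (- x) = - star1 x.
Proof. by rewrite /star1 => x_neq0; case: ifP => ?; case: ifP => ?; lia. Qed.

Lemma star1_eqN (x y : int) : x != 0 -> y != 0 -> (0 < x) != (0 < y) ->
  star1 x = - star1 y -> x = - y.
Proof.
by rewrite /star1 => ? ?; case: ifP => pos_x; case: ifP => pos_y; rewrite ?pos_x ?pos_y /=; lia.
Qed.

Lemma mulr_lt0_gt0 (x y : int) : x * y < 0 -> (0 < y) = ~~ (0 < x).
Proof. by case: (ltrgtP 0 x) => ?; case: (ltrgtP 0 y) => ? //; nia. Qed.

(* Functions [nat -> int] stand for tuples through their first [s] values;
   [antimirror s f h] is the tuple equation [f = - overline h]. *)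
Definition antimirror (s : nat) (f h : nat -> int) : Prop :=
  forall k, (k < s)%N -> f k = - h (s - k.+1)%N.

Definition star1_at (g : nat -> int) (I : nat) (k : nat) : int :=
  if k == I then star1 (g I) else g k.

Lemma eq_negs_barP {b c : seq int} : size b = size c ->
  b = negs (bar c) <-> antimirror (size b) (nth 0 b) (nth 0 c).
Proof.
move=> eq_sz; split=> [-> k | mirror_bc].
  by rewrite size_map size_rev => lt_kc; rewrite (nth_map 0) ?nth_rev ?size_rev.
apply: (@eq_from_nth _ 0) => [|k lt_kb]; first by rewrite size_map size_rev.
by rewrite mirror_bc // (nth_map 0) ?nth_rev ?size_rev -?eq_sz.
Qed.

Lemma nth_sup (a : seq int) (i : nat) : nth 0 (sup a i) =1 star1_at (nth 0 a) i.-1.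
Proof. by move=> k; rewrite /sup nth_set_nth. Qed.

Lemma size_sup (a : seq int) (i : nat) : (i <= size a)%N -> (0 < i)%N ->
  size (sup a i) = size a.
Proof. by move=> ? ?; rewrite /sup size_set_nth; lia. Qed.

Section StarMirror.

Variables (s I J : nat) (g : nat -> int).
Hypotheses (lt_IJ : (I < J)%N) (lt_Js : (J < s)%N).
Hypothesis alt_g : forall k, (k.+1 < s)%N -> g k * g k.+1 < 0.

Lemma alternating_neq0 k : (k < s)%N -> g k != 0.
Proof.
move=> lt_ks; have [lt_Sks | le_sk] := ltnP k.+1 s.
  by apply: contraTneq _ (alt_g _ lt_Sks) => ->; rewrite mul0r ltxx.
have k_gt0 : (0 < k)%N by lia.
have := alt_g k.-1; rewrite prednK // => /(_ lt_ks).
by apply: contraTneq => ->; rewrite mulr0 ltxx.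
Qed.

Lemma alternating_sign k : (k < s)%N -> (0 < g k) = (0 < g 0%N) (+) odd k.
Proof.
elim: k => [|k IHk] lt_ks; first by rewrite addbF.
have /mulr_lt0_gt0 -> := alt_g _ lt_ks.
by rewrite IHk 1?ltnW //= addbN.
Qed.

Lemma star1_antimirror : (I + J).+1 = s -> antimirror s g g ->
  antimirror s (star1_at g I) (star1_at g J).
Proof.
move=> sum_IJ mirror_g k lt_ks; rewrite /star1_at.
have [-> | neq_kI] := eqVneq k I; last by rewrite ifN; [exact: mirror_g | apply/eqP; lia].
have -> : (s - I.+1 = J)%N by lia.
have -> : g J = - g I by rewrite mirror_g //; congr (- g _); lia.
by rewrite eqxx star1N ?opprK // alternating_neq0 //; lia.
Qed.

Hypothesis mirror_star1 : antimirror s (star1_at g I) (star1_at g J).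

Lemma antimirror_star1_sum : (I + J).+1 = s.
Proof.
apply/eqP; apply: contraT => sum_neq.
have lt_Is : (I < s)%N by lia.
have := mirror_star1 _ lt_Is; rewrite /star1_at eqxx ifN; last by apply/eqP; lia.
have [-> /eqP|neq_pI at_I] := eqVneq (s - I.+1)%N I; first by rewrite (negbTE (star1_neqN _)).
have lt_ps : (s - I.+1 < s)%N by lia.
have := mirror_star1 _ lt_ps; rewrite /star1_at (negbTE neq_pI) subnSK // subKn 1?ltnW // ltn_eqF //.
by move=> at_p; move/eqP: at_I; rewrite at_p opprK (negbTE (star1_neq _)).
Qed.

Lemma antimirror_star1_opp : g I = - g J.
Proof.
have sum_IJ := antimirror_star1_sum.
have lt_Is : (I < s)%N by lia.
have := mirror_star1 _ lt_Is; rewrite /star1_at eqxx ifT; last by apply/eqP; lia.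
have [eq_odd _|neq_odd] := eqVneq (odd I) (odd J).
  have lt_ms : ((I + J)./2 < s)%N by lia.
  have := mirror_star1 _ lt_ms; rewrite /star1_at !ifN; try (apply/eqP; lia).
  have -> : (s - ((I + J)./2).+1 = (I + J)./2)%N by lia.
  by move/eqP; rewrite -addr_eq0 -mulr2n mulrn_eq0 /= (negbTE (alternating_neq0 _ lt_ms)).
apply: star1_eqN; rewrite ?alternating_neq0 // (alternating_sign _ lt_Is) (alternating_sign _ lt_Js).
by move: neq_odd; case: (odd I); case: (odd J); case: (0 < g 0%N).
Qed.

Lemma antimirror_star1_sym : antimirror s g g.
Proof.
have sum_IJ := antimirror_star1_sum.
move=> k lt_ks; have := mirror_star1 _ lt_ks; rewrite /star1_at.
have [-> _|neq_kI] := eqVneq k I.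
  have -> : (s - I.+1 = J)%N by lia.
  by rewrite antimirror_star1_opp.
have [-> _|neq_kJ] := eqVneq k J.
  have -> : (s - J.+1 = I)%N by lia.
  by rewrite antimirror_star1_opp opprK.
by rewrite ifN //; apply/eqP; lia.
Qed.

End StarMirror.

Lemma antimirror_star1P s I J g : (I < J)%N -> (J < s)%N ->
    (forall k, (k.+1 < s)%N -> g k * g k.+1 < 0) ->
  antimirror s (star1_at g I) (star1_at g J) <-> antimirror s g g /\ (I + J).+1 = s.
Proof.
move=> lt_IJ lt_Js alt_g; split=> [mirror_star1 | [mirror_g sum_IJ]].
  split; first exact: antimirror_star1_sym alt_g mirror_star1.
  exact: antimirror_star1_sum mirror_star1.
exact: star1_antimirror alt_g sum_IJ mirror_g.
Qed.

Lemma eq_antimirror {s : nat} {f1 f2 h1 h2 : nat -> int} : f1 =1 f2 -> h1 =1 h2 ->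
  antimirror s f1 h1 <-> antimirror s f2 h2.
Proof. by move=> eq_f eq_h; split=> mirror k /mirror; rewrite eq_f eq_h. Qed.

Theorem lemma1 (s : nat) (alpha : seq int) (i j : nat) :
  inK s alpha -> (1 <= i)%N -> (i < j)%N -> (j <= s)%N ->
  (sup alpha i = negs (bar (sup alpha j)) <->
   symmetricK alpha /\ (i + j = s + 1)%N).
Proof.
move=> [size_a [_ alt_a]] i_gt0 lt_ij le_js.
have size_sup_a k : (0 < k <= s)%N -> size (sup alpha k) = s.
  by case/andP=> k_gt0 le_ks; rewrite size_sup ?size_a.
have size_sup_ij : size (sup alpha i) = size (sup alpha j) by rewrite !size_sup_a //; lia.
rewrite /symmetricK (eq_negs_barP size_sup_ij) (eq_negs_barP (erefl _)).
rewrite (eq_antimirror (nth_sup _ _) (nth_sup _ _)) size_sup_a ?size_a; last by lia.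
have [lt_IJ lt_Js] : (i.-1 < j.-1)%N /\ (j.-1 < s)%N by lia.
rewrite antimirror_star1P //.
by split=> -[mirror_a sum_ij]; split=> //; lia.
Qed.
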